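(* Let $p$ be an odd prime, $m\geq 1$, $Q=T_{(p^m)}$ and $K=K_Q(p)$. An element $M\in K$ satisfies $M^p=\mathbbm{1}$ if either $M=S_\xi$ for some $S_\xi\in T_{(p)}$, or $M=S_\xi X^b$ with $S_\xi\in Q$ and $b\neq 0$.
   Context: Let $\{|q\rangle:q\in\mathbb{Z}_p\}$ be the computational basis of $\mathbb{C}^p$ and $X|q\rangle=|q+1\rangle$ the shift operator. For $\xi:\mathbb{Z}_p\to U(1)$ let $S_\xi=\mathrm{diag}(\xi(0),\dots,\xi(p-1))$. Let $T=\{S_\xi:\prod_{q\in\mathbb{Z}_p}\xi(q)=1\}$ (a maximal torus of $SU(p)$) and for $k\ge1$, $T_{(p^k)}=\{S\in T: S^{p^k}=\mathbbm{1}\}$. $K_Q(p)$ is the subgroup of $SU(p)$ generated by all $S_\xi X^b$ with $S_\xi\in Q$, $b\in\mathbb{Z}_p$. *)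

From HB Require Import structures.
From mathcomp Require Import all_boot all_order all_algebra.
Set Implicit Arguments. Unset Strict Implicit. Unset Printing Implicit Defensive.
Import Order.TTheory GRing.Theory Num.Theory.
Local Open Scope ring_scope.

(* Complex scalars: any numeric algebraically closed field C (e.g. algC or
   complex R).  The computational basis |q>, q in Z_p, is indexed by 'I_p,
   with addition mod p written via nat arithmetic. *)

Definition Sxi (C : numClosedFieldType) (p : nat) (xi : 'I_p -> C) : 'M[C]_p :=
  diag_mx (\row_q xi q).

(* shift operator X|q> = |q+1 mod p>, i.e. X_{i,j} = [i = j+1 mod p] *)
Definition Xshift (C : numClosedFieldType) (p : nat) : 'M[C]_p :=
  \matrix_(i, j) ((nat_of_ord i == (nat_of_ord j).+1 %% p)%N)%:R.

Definition inT (C : numClosedFieldType) (p : nat) (S : 'M[C]_p) : Prop :=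
  exists xi : 'I_p -> C,
    S = Sxi xi /\ (forall q, `|xi q| = 1) /\ \prod_(q < p) xi q = 1.

Definition inTpk (C : numClosedFieldType) (p k : nat) (S : 'M[C]_p) : Prop :=
  inT S /\ S ^+ (p ^ k) = 1.

(* K_Q(p): subgroup generated by all S X^b with S in Q, b in Z_p
   (closure of 1 under left multiplication by generators and their inverses). *)
Inductive KQ (C : numClosedFieldType) (p : nat) (Q : 'M[C]_p -> Prop)
  : 'M[C]_p -> Prop :=
| KQ_one : KQ Q 1
| KQ_gen (S : 'M[C]_p) (b : 'I_p) (M : 'M[C]_p) :
    Q S -> KQ Q M -> KQ Q ((S *m (Xshift C p) ^+ b) *m M)
| KQ_inv (S : 'M[C]_p) (b : 'I_p) (M : 'M[C]_p) :
    Q S -> KQ Q M -> KQ Q (invmx (S *m (Xshift C p) ^+ b) *m M).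

From HB Require Import structures.
From mathcomp Require Import all_boot all_order all_algebra.
Import Order.TTheory GRing.Theory Num.Theory.
Local Open Scope ring_scope.

(* For T_(p) the claim is the definition.  Otherwise (S_xi X^b)^p maps |j>
   to xi(j+b) xi(j+2b) ... xi(j+pb) |j+pb>; as b is a unit mod p the indices
   j+b, ..., j+pb run over all of Z_p, so this is det S_xi |j> = |j>. *)

Lemma eqn_modMr_coprime d b m n :
  coprime d b -> (m * b == n * b %[mod d])%N = (m == n %[mod d])%N.
Proof.
move=> co_db; wlog le_nm : m n / (n <= m)%N.
  move=> IH; have [/IH//|/ltnW/IH] := leqP n m.
  by rewrite eq_sym [X in _ = X]eq_sym.
by rewrite !eqn_mod_dvd ?leq_mul2r ?le_nm ?orbT // -mulnBl Gauss_dvdl.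
Qed.

Lemma Sxi_inj (C : numClosedFieldType) (p : nat) (xi xi' : 'I_p -> C) :
  Sxi xi = Sxi xi' -> xi =1 xi'.
Proof. by move/matrixP=> E q; have := E q q; rewrite !mxE !eqxx !mulr1n. Qed.

Lemma inT_Sxi_prod (C : numClosedFieldType) (p : nat) (xi : 'I_p -> C) :
  inT (Sxi xi) -> \prod_(q < p) xi q = 1.
Proof.
case=> xi' [/Sxi_inj E [_ prod1]].
by rewrite -[RHS]prod1; apply: eq_bigr => q _; rewrite E.
Qed.

Section ShiftedDiagonal.

Variables (C : numClosedFieldType) (n : nat).
Local Notation p := n.+1.
Local Notation X := (Xshift C p).

Lemma affine_orbit_inj (j b : nat) : coprime p b ->
  injective (fun l : 'I_p => inord ((j + l.+1 * b) %% p) : 'I_p).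
Proof.
move=> co_pb l l' /(congr1 val) /=; rewrite !inordK ?ltn_pmod // => /eqP.
rewrite eqn_modDl eqn_modMr_coprime // -(addn1 l) -(addn1 l') eqn_modDr.
by rewrite !modn_small // => /eqP/val_inj.
Qed.

Lemma mulmx_Xshift_entry (A : 'M[C]_p) i j :
  (A *m X) i j = A i (inord (j.+1 %% p)).
Proof.
rewrite mxE (bigD1 (inord (j.+1 %% p))) //= big1 ?addr0.
  by rewrite mxE inordK ?ltn_pmod // eqxx mulr1.
move=> k /negbTE k_neq; rewrite mxE.
suff -> : (k == j.+1 %% p :> nat)%N = false by rewrite mulr0.
by apply/negbTE; apply: contraFN k_neq => /eqP <-; rewrite inord_val.
Qed.

Lemma mulmx_Xshift_pow_entry (A : 'M[C]_p) k i j :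
  (A *m X ^+ k) i j = A i (inord ((j + k) %% p)).
Proof.
elim: k j => [|k IH] j; first by rewrite mulmx1 addn0 modn_small // inord_val.
rewrite exprSr mulmxA mulmx_Xshift_entry IH inordK ?ltn_pmod //.
by rewrite modnDml addSnnS addnC.
Qed.

Lemma diag_mul_Xshift_pow_exp (xi : 'I_p -> C) b k (i j : 'I_p) :
  ((Sxi xi *m X ^+ b) ^+ k) i j =
  (i == (j + k * b) %% p :> nat)%N%:R *
  \prod_(l < k) xi (inord ((j + l.+1 * b) %% p)).
Proof.
elim: k j => [|k IH] j.
  by rewrite expr0 mxE mul0n addn0 modn_small // big_ord0 mulr1.
rewrite exprSr -mulmxE mulmxA mulmx_Xshift_pow_entry /Sxi mul_mx_diag !mxE IH.
rewrite inordK ?ltn_pmod // modnDml -addnA -mulSn big_ord_recl mul1n.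
rewrite -mulrA [_ * xi _]mulrC; congr (_ * (_ * _)); apply: eq_bigr => l _.
by rewrite lift0 modnDml -addnA -mulSn.
Qed.

Lemma diag_mul_Xshift_pow_order (xi : 'I_p -> C) b :
  coprime p b -> \prod_(q < p) xi q = 1 -> (Sxi xi *m X ^+ b) ^+ p = 1.
Proof.
move=> co_pb det1; apply/matrixP => i j.
rewrite diag_mul_Xshift_pow_exp mxE.
rewrite -(reindex_inj (F := xi) (P := predT) (affine_orbit_inj j b co_pb)) det1.
by rewrite mulr1 (addnC j) (mulnC p) modnMDl modn_small.
Qed.

End ShiftedDiagonal.

Theorem lemma2 (C : numClosedFieldType) (p m : nat) (M : 'M[C]_p) :
  prime p -> odd p -> (1 <= m)%N ->
  KQ (@inTpk C p m) M ->
  ((exists xi : 'I_p -> C, @inTpk C p 1 (Sxi xi) /\ M = Sxi xi) \/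
   (exists (xi : 'I_p -> C) (b : 'I_p),
      @inTpk C p m (Sxi xi) /\ nat_of_ord b <> 0%N /\
      M = Sxi xi *m (Xshift C p) ^+ b)) ->
  M ^+ p = 1.
Proof.
move=> p_pr _ _ _ [[xi [[_ xi_p1] ->]] | [xi [b [[T_xi _] [b_neq0 ->]]]]].
  by rewrite expn1 in xi_p1.
case: p p_pr M xi b T_xi b_neq0 => [//|n] p_pr _ xi b T_xi b_neq0.
apply: diag_mul_Xshift_pow_order; last exact: inT_Sxi_prod.
by rewrite prime_coprime // gtnNdvd ?ltn_ord // lt0n; apply/eqP.
Qed.
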